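(* Let $\alpha=\ln2/\ln3$ and $t_i=\dfrac{2^{\lfloor (i-1)/\alpha\rfloor}}{3^i}$ for $i\ge1$. Then $$\lim_{m\to\infty}\frac1m\sum_{i=1}^m t_i=\frac1\alpha\int_1^{1+\alpha}3^{-x}\,dx=\frac{1}{6\ln2}.$$
   Context: The numbers $t_i$ are the terms of the (divergent) series $-\Phi_{\mathbb{R}}(1c_\alpha)$, where $1c_\alpha=(\lceil(j+1)\alpha\rceil-\lceil j\alpha\rceil)_{j\ge0}$ and $\Phi_{\mathbb{R}}(w)=-\sum_{i\ge0}2^{d_i}/3^{i+1}$ for a word with $1$'s at positions $d_0<d_1<\cdots$. *)

From Stdlib Require Import Reals.
From Coquelicot Require Import Coquelicot.
Open Scope R_scope.

Definition alpha : R := ln 2 / ln 3.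

(* floor of a real: Stdlib's Int_part x = up x - 1 is exactly floor x. *)
Definition Rfloor_Z (x : R) : Z := Int_part x.

Definition t (i : nat) : R :=
  powerRZ 2 (Rfloor_Z ((INR i - 1) / alpha)) / 3 ^ i.

Definition cesaro_t (m : nat) : R := / INR m * sum_n_m t 1 m.

(* Since 2^((i-1)/alpha) = 3^(i-1), we have t_i = g(x_i) / 3 where
   g(x) = 2^(-frac x) and x_i = (i-1) theta lies on the orbit of the rotation by
   theta = 1/alpha = log_2 3, which is irrational (3^m <> 2^k).  So the theorem
   says that the averages of g along this orbit tend to
   int_0^1 2^(-x) dx = 1/(2 ln 2), and a direct computation of the integral
   gives the second claim.

   Instead of Weyl's criterion we use a telescoping argument.  Choose m with
   d = frac(m theta) > 0 small (Kronecker, via the pigeonhole principle).  For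
   every x, 2^d g(x + m theta) = g(x) (1 + e) where e in {0,1} is the carry of
   frac x + d, and a carry forces g(x) ~ 1/2.  Summing over i = 1..n, the
   shifted sum differs from S_n = sum g(x_i) by at most m and the number of
   carries is n d up to m; hence (2^d - 1) S_n ~ n d / 2 with
   2^d - 1 ~ d ln 2, i.e. S_n / n = 1/(2 ln 2) + O(d + m/(d n)). *)

From Stdlib Require Import Reals Lra Lia ZArith List Classical.
From Coquelicot Require Import Coquelicot.
Open Scope R_scope.

Lemma ln2_pos : 0 < ln 2.
Proof. rewrite <- ln_1. apply ln_increasing; lra. Qed.

Lemma ln2_lt_ln3 : ln 2 < ln 3.
Proof. apply ln_increasing; lra. Qed.

Definition frac (x : R) : R := x - IZR (Int_part x).

Lemma frac_bounds x : 0 <= frac x < 1.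
Proof. unfold frac. destruct (base_Int_part x). lra. Qed.

Lemma frac_unique x r z : 0 <= r < 1 -> x = IZR z + r -> frac x = r.
Proof.
  intros Hr Hx. unfold frac, Int_part.
  rewrite <- (tech_up x (z + 1)); rewrite ?plus_IZR; try lra.
  replace (z + 1 - 1)%Z with z by ring. lra.
Qed.

Lemma frac_add_cases x y :
  (frac x + frac y < 1 /\ frac (x + y) = frac x + frac y) \/
  (1 <= frac x + frac y /\ frac (x + y) = frac x + frac y - 1).
Proof.
  pose proof (frac_bounds x); pose proof (frac_bounds y).
  set (zx := Int_part x); set (zy := Int_part y).
  assert (E : x + y = IZR zx + IZR zy + (frac x + frac y)) by (unfold frac, zx, zy; ring).
  destruct (Rlt_le_dec (frac x + frac y) 1).
  - left. split; auto. apply frac_unique with (zx + zy)%Z; [lra|].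
    rewrite plus_IZR. lra.
  - right. split; auto. apply frac_unique with (zx + zy + 1)%Z; [lra|].
    rewrite !plus_IZR. lra.
Qed.

(* If [frac x = 1 - eta], then with [k = floor (1/eta)] the multiple [k x]
   has fractional part [1 - k eta < eta]. *)
Lemma frac_multiple_small x :
  exists k, (1 <= k)%nat /\ frac (INR k * x) < 1 - frac x.
Proof.
  pose proof (frac_bounds x).
  set (eta := 1 - frac x).
  assert (Heta : 0 < eta <= 1) by (unfold eta; lra).
  set (K := Int_part (/ eta)).
  destruct (base_Int_part (/ eta)) as [B1 B2]; fold K in B1, B2.
  assert (Hinv : 1 <= / eta) by (rewrite <- Rinv_1; apply Rinv_le_contravar; lra).
  assert (K1 : (0 < K)%Z) by (apply lt_IZR; lra).
  set (k := Z.to_nat K).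
  assert (Ek : INR k = IZR K) by (unfold k; rewrite INR_IZR_INZ, Z2Nat.id by lia; auto).
  assert (Hkl : INR k * eta <= 1).
  { rewrite Ek. replace 1 with (/ eta * eta) by (field; lra).
    apply Rmult_le_compat_r; lra. }
  assert (Hku : 1 < (INR k + 1) * eta).
  { rewrite Ek. replace 1 with (/ eta * eta) at 1 by (field; lra).
    apply Rmult_lt_compat_r; lra. }
  exists k. split; [unfold k; lia|].
  rewrite (frac_unique (INR k * x) (1 - INR k * eta)
             (Z.of_nat k * (Int_part x + 1) - 1)).
  - fold eta. lra.
  - lra.
  - rewrite minus_IZR, mult_IZR, plus_IZR, <- INR_IZR_INZ.
    replace x with (IZR (Int_part x) + 1 - eta) at 1 by (unfold eta, frac; ring).
    ring.
Qed.

(** * Small positive fractional parts of the multiples of an irrational *)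

Lemma pigeonhole N (f : nat -> nat) :
  (forall k, (k <= N)%nat -> (f k < N)%nat) ->
  exists i j, (i < j <= N)%nat /\ f i = f j.
Proof.
  intros Hf.
  set (l := map f (seq 0 (S N))).
  assert (Hlen : length l = S N) by (unfold l; rewrite length_map, length_seq; auto).
  assert (Hnth : forall i, (i < S N)%nat -> nth i l 0%nat = f i).
  { intros i Hi. rewrite (nth_indep l _ (f 0%nat)) by (rewrite Hlen; lia).
    unfold l. rewrite map_nth, seq_nth; auto. }
  assert (Hdup : ~ NoDup l).
  { intros Hnd. apply (NoDup_incl_length (l' := seq 0 N)) in Hnd.
    - rewrite Hlen, length_seq in Hnd. lia.
    - intros y Hy. unfold l in Hy. apply in_map_iff in Hy as [k [<- Hk]].
      apply in_seq in Hk. apply in_seq. specialize (Hf k). lia. }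
  apply NNPP. intros Hno. apply Hdup, (NoDup_nth l 0%nat).
  rewrite Hlen. intros i j Hi Hj E. rewrite !Hnth in E by auto.
  destruct (Nat.lt_total i j) as [Hij | [Hij | Hij]]; auto;
    exfalso; apply Hno; [exists i, j | exists j, i]; split; auto; lia.
Qed.

Lemma close_pair (u : nat -> R) N : (1 <= N)%nat -> (forall k, 0 <= u k < 1) ->
  exists i j, (i < j <= N)%nat /\ Rabs (u j - u i) < / INR N.
Proof.
  intros HN Hu.
  assert (NP : 0 < INR N) by (apply lt_0_INR; lia).
  set (box k := Int_part (INR N * u k)).
  assert (Hbox : forall k, (0 <= box k)%Z /\ (Z.to_nat (box k) < N)%nat).
  { intros k. destruct (Hu k). destruct (base_Int_part (INR N * u k)) as [B1 B2].
    assert (INR N * u k < INR N) by nra.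
    assert (P : (-1 < box k)%Z) by (apply lt_IZR; unfold box; nra).
    split; [lia|]. apply INR_lt. rewrite INR_IZR_INZ, Z2Nat.id by lia. unfold box; lra. }
  destruct (pigeonhole N (fun k => Z.to_nat (box k))) as [i [j [Hij Hf]]].
  { intros k _. apply Hbox. }
  apply Z2Nat.inj in Hf; try apply Hbox.
  exists i, j. split; auto.
  destruct (base_Int_part (INR N * u i)); destruct (base_Int_part (INR N * u j)).
  fold (box i) (box j) in *. rewrite Hf in *.
  apply Rabs_def1; apply (Rmult_lt_reg_l (INR N)); auto;
    rewrite ?Rmult_minus_distr_l, ?Ropp_mult_distr_r_reverse, Rinv_r; lra.
Qed.

Section SmallFractionalParts.

Variable theta : R.
Hypothesis theta_irrational : forall m, (1 <= m)%nat -> frac (INR m * theta) <> 0.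

Lemma small_frac_multiple eps : 0 < eps ->
  exists m, (1 <= m)%nat /\ 0 < frac (INR m * theta) < eps.
Proof.
  intros He.
  destruct (archimed_cor1 eps He) as [N [HN HN0]].
  destruct (close_pair (fun k => frac (INR k * theta)) N ltac:(lia)
              (fun k => frac_bounds _)) as [i [j [Hij Hd]]].
  assert (Ej : INR (j - i) * theta + INR i * theta = INR j * theta)
    by (rewrite minus_INR by lia; ring).
  pose proof (frac_bounds (INR (j - i) * theta)).
  pose proof (theta_irrational (j - i) ltac:(lia)).
  destruct (frac_add_cases (INR (j - i) * theta) (INR i * theta)) as [[_ E] | [_ E]];
    rewrite Ej in E.
  - (* no carry: [frac ((j-i) theta)] is the small gap itself *)
    exists (j - i)%nat. split; [lia|].
    rewrite Rabs_pos_eq in Hd by lra. lra.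
  - (* carry: [frac ((j-i) theta)] is close to 1, so a multiple of it is small *)
    destruct (frac_multiple_small (INR (j - i) * theta)) as [k [Hk Hsmall]].
    exists (k * (j - i))%nat. rewrite mult_INR, Rmult_assoc.
    pose proof (frac_bounds (INR k * (INR (j - i) * theta))).
    pose proof (theta_irrational (k * (j - i)) ltac:(nia)) as Hnz.
    rewrite mult_INR, Rmult_assoc in Hnz.
    rewrite Rabs_left in Hd by lra. split; [nia | lra].
Qed.

End SmallFractionalParts.

(* Real-valued forms of Coquelicot's linearity lemmas, usable by [rewrite]. *)
Lemma sum_n_m_Rplus (f h : nat -> R) a b :
  sum_n_m (fun i => f i + h i) a b = sum_n_m f a b + sum_n_m h a b.
Proof. exact (sum_n_m_plus f h a b). Qed.

Lemma sum_n_m_Rmult_l c (f : nat -> R) a b :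
  sum_n_m (fun i => c * f i) a b = c * sum_n_m f a b.
Proof. exact (sum_n_m_mult_l c f a b). Qed.

Lemma sum_n_m_Rminus (f h : nat -> R) a b :
  sum_n_m (fun i => f i - h i) a b = sum_n_m f a b - sum_n_m h a b.
Proof.
  rewrite (sum_n_m_ext _ (fun i => f i + (-1) * h i)) by (intros; simpl; ring).
  rewrite sum_n_m_Rplus, sum_n_m_Rmult_l. simpl; ring.
Qed.

Lemma sum_n_m_shift1 (f : nat -> R) a b : (a <= S b)%nat ->
  sum_n_m (fun i => f (S i)) a b = sum_n_m f a b + f (S b) - f a.
Proof.
  intros Hab. rewrite sum_n_m_S.
  pose proof (sum_n_Sm f a b Hab) as E1. pose proof (sum_Sn_m f a (S b) Hab) as E2.
  unfold plus in E1, E2; simpl in E1, E2. lra.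
Qed.

Lemma sum_n_m_shift_bound (f : nat -> R) m a b : (a <= S b)%nat ->
  (forall k, 0 <= f k <= 1) ->
  Rabs (sum_n_m (fun i => f (i + m)%nat) a b - sum_n_m f a b) <= INR m.
Proof.
  intros Hab Hf. induction m as [|m IH].
  - rewrite (sum_n_m_ext _ f) by (intros; simpl; f_equal; lia).
    rewrite Rminus_diag, Rabs_R0. simpl; lra.
  - rewrite (sum_n_m_ext _ (fun i => (fun j => f (j + m)%nat) (S i))) by (intros; simpl; f_equal; lia).
    rewrite (sum_n_m_shift1 (fun j => f (j + m)%nat)) by auto. rewrite S_INR.
    pose proof (Hf (S b + m)%nat); pose proof (Hf (a + m)%nat).
    apply Rabs_le_between in IH. apply Rabs_le. lra.
Qed.

Lemma sum_n_m_unit_bounds (f : nat -> R) n :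
  (forall k, 0 <= f k <= 1) -> 0 <= sum_n_m f 1 n <= INR n.
Proof.
  intros Hf.
  pose proof (sum_n_m_le (fun _ => 0) f 1 n (fun k => proj1 (Hf k))).
  pose proof (sum_n_m_le f (fun _ => 1) 1 n (fun k => proj2 (Hf k))).
  rewrite !sum_n_m_const in *. replace (S n - 1)%nat with n in * by lia. lra.
Qed.

(** * The 1-periodic function [x |-> 2^(-frac x)] and its carries *)

Definition g (x : R) : R := Rpower 2 (- frac x).

Definition carry (x z : R) : R := frac x + frac z - frac (x + z).

Lemma Rpower2_le x y : x <= y -> Rpower 2 x <= Rpower 2 y.
Proof. intros; apply Rle_Rpower; lra. Qed.

Lemma g_bounds x : 0 <= g x <= 1.
Proof.
  unfold g. pose proof (frac_bounds x). split.
  - left; apply exp_pos.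
  - rewrite <- (Rpower_O 2) by lra. apply Rpower2_le. lra.
Qed.

(* Multiplying [g (x + z)] by [2^(frac z)] gives back [g x], doubled exactly
   when adding [z] produced a carry; a carry forces [frac x >= 1 - frac z],
   hence [1/2 <= g x <= 2^(frac z) / 2]. *)
Lemma carry_step x z :
  (carry x z = 0 \/ carry x z = 1) /\
  Rpower 2 (frac z) * g (x + z) = g x + carry x z * g x /\
  carry x z / 2 <= carry x z * g x <= carry x z * Rpower 2 (frac z) / 2.
Proof.
  unfold carry, g. pose proof (frac_bounds x); pose proof (frac_bounds z).
  assert (Half : forall u, Rpower 2 (u - 1) = Rpower 2 u / 2).
  { intros u. unfold Rminus. rewrite Rpower_plus, Rpower_Ropp, Rpower_1; lra. }
  destruct (frac_add_cases x z) as [[_ E] | [C E]]; rewrite E.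
  - replace (frac x + frac z - (frac x + frac z)) with 0 by ring.
    rewrite <- Rpower_plus. replace (frac z + - (frac x + frac z)) with (- frac x) by ring.
    lra.
  - replace (frac x + frac z - (frac x + frac z - 1)) with 1 by ring.
    rewrite <- Rpower_plus, !Rmult_1_l.
    replace (frac z + - (frac x + frac z - 1)) with (- frac x + 1) by ring.
    rewrite Rpower_plus, Rpower_1 by lra.
    split; [lra|]. split; [ring|].
    replace (1 / 2) with (Rpower 2 0 / 2) by (rewrite Rpower_O; lra).
    rewrite <- !Half. split; apply Rpower2_le; lra.
Qed.

(** * The averaging argument *)

(* With [y = 2^d], [l = ln 2], a sum [S] of [n]
   values of [g], its shift [S'], the carry count [E] and the carried mass [W]:
   [y S' = S + W] and [S' ~ S] give [(y - 1) S ~ W ~ E / 2 ~ n d / 2], and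
   [y - 1 ~ d l] then forces [S ~ n / (2 l)]. *)
Lemma carry_balance (n m d l y S S' E W : R) :
  0 <= n -> 0 <= m -> 0 < d -> 0 < l -> y <= 2 ->
  d * l <= y - 1 -> y - 1 <= y * (d * l) ->
  0 <= S -> Rabs (E - n * d) <= m -> E / 2 <= W <= y * E / 2 ->
  y * S' = S + W -> Rabs (S' - S) <= m ->
  Rabs (S - n / (2 * l)) <= n * d + 3 * m / (d * l).
Proof.
  intros Hn Hm Hd Hl Hy2 Hy Hy' HS HE [HW1 HW2] Hshift HS'.
  apply Rabs_le_between in HE, HS'.
  assert (Hdl : 0 < d * l) by (apply Rmult_lt_0_compat; lra).
  assert (Hnd : 0 <= n * d) by (apply Rmult_le_pos; lra).
  assert (Key : S * (y - 1) = W - y * (S' - S)) by (rewrite Rmult_minus_distr_l; lra).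
  assert (Hym : m <= y * m <= 2 * m) by (split; nra).
  assert (HyS : - (y * m) <= y * (S' - S) <= y * m)
    by (split; nra).
  apply Rabs_le. split.
  -
    assert (B1 : S * (y - 1) <= S * (y * (d * l))) by (apply Rmult_le_compat_l; lra).
    assert (B2 : (y - 1) * (n * d) <= (y * (d * l)) * (n * d))
      by (apply Rmult_le_compat_r; lra).
    assert (B3 : 0 <= (y * (d * l)) * (n * d))
      by (apply Rmult_le_pos; [apply Rmult_le_pos|]; lra).
    assert (Low : (n / (2 * l) - n * d - 3 * m / (d * l)) * (y * (d * l))
                  <= S * (y * (d * l))).
    { replace ((n / (2 * l) - n * d - 3 * m / (d * l)) * (y * (d * l)))
        with (y * (n * d) / 2 - (y * (d * l)) * (n * d) - 3 * (y * m)) by (field; lra).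
      lra. }
    apply Rmult_le_reg_r in Low; [lra | apply Rmult_lt_0_compat; lra].
  -
    assert (A1 : S * (d * l) <= S * (y - 1)) by (apply Rmult_le_compat_l; lra).
    assert (A2 : y * E <= y * (n * d + m)) by (apply Rmult_le_compat_l; lra).
    assert (A3 : (y - 1) * (n * d) <= (2 * (d * l)) * (n * d)).
    { apply Rmult_le_compat_r; [lra|].
      assert (y * (d * l) <= 2 * (d * l)) by (apply Rmult_le_compat_r; lra). lra. }
    assert (Up : S * (d * l) <= (n / (2 * l) + n * d + 3 * m / (d * l)) * (d * l)).
    { replace ((n / (2 * l) + n * d + 3 * m / (d * l)) * (d * l))
        with (n * d / 2 + (d * l) * (n * d) + 3 * m) by (field; lra).
      rewrite Rmult_plus_distr_l in A2. lra. }
    apply Rmult_le_reg_r in Up; lra.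
Qed.

Lemma Rpower2_minus_1_bounds d :
  d * ln 2 <= Rpower 2 d - 1 <= Rpower 2 d * (d * ln 2).
Proof.
  unfold Rpower. pose proof (exp_ineq1_le (d * ln 2)).
  pose proof (exp_ineq1_le (- (d * ln 2))). rewrite exp_Ropp in H0.
  pose proof (exp_pos (d * ln 2)).
  split; [lra|].
  apply (Rmult_le_compat_l (exp (d * ln 2))) in H0; [|lra].
  rewrite Rinv_r in H0 by lra. lra.
Qed.

Section Averages.

Variables theta c : R.
Hypothesis theta_irrational : forall m, (1 <= m)%nat -> frac (INR m * theta) <> 0.

Definition orbit (i : nat) : R := c + INR i * theta.

Definition orbit_avg (n : nat) : R := / INR n * sum_n_m (fun i => g (orbit i)) 1 n.

Lemma orbit_shift i m : orbit (i + m) = orbit i + INR m * theta.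
Proof. unfold orbit. rewrite plus_INR. ring. Qed.

Lemma carry_count m n :
  Rabs (sum_n_m (fun i => carry (orbit i) (INR m * theta)) 1 n
        - INR n * frac (INR m * theta)) <= INR m.
Proof.
  set (d := frac (INR m * theta)).
  rewrite (sum_n_m_ext _ (fun i => (frac (orbit i) + d) - frac (orbit (i + m)))).
  2: { intros i. unfold carry. rewrite orbit_shift. reflexivity. }
  rewrite sum_n_m_Rminus, sum_n_m_Rplus, sum_n_m_const.
  replace (S n - 1)%nat with n by lia.
  pose proof (sum_n_m_shift_bound (fun i => frac (orbit i)) m 1 n ltac:(lia)
                (fun k => conj (proj1 (frac_bounds _)) (Rlt_le _ _ (proj2 (frac_bounds _))))).
  apply Rabs_le_between in H. apply Rabs_le. lra.
Qed.

Lemma carry_sums m n :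
  let z := INR m * theta in
  let y := Rpower 2 (frac z) in
  let E := sum_n_m (fun i => carry (orbit i) z) 1 n in
  let W := sum_n_m (fun i => carry (orbit i) z * g (orbit i)) 1 n in
  y * sum_n_m (fun i => g (orbit (i + m))) 1 n = sum_n_m (fun i => g (orbit i)) 1 n + W
  /\ E / 2 <= W <= y * E / 2.
Proof.
  intros z y E W. split.
  - rewrite <- sum_n_m_Rmult_l. unfold W. rewrite <- sum_n_m_Rplus.
    apply sum_n_m_ext. intros i. rewrite orbit_shift. apply (carry_step (orbit i) z).
  - replace (E / 2) with (/ 2 * E) by (unfold Rdiv; ring).
    replace (y * E / 2) with (y / 2 * E) by (unfold Rdiv; ring).
    unfold E. rewrite <- !sum_n_m_Rmult_l.
    split; apply sum_n_m_le; intros i; destruct (carry_step (orbit i) z) as [_ [_ B]];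
      unfold y; lra.
Qed.

Lemma orbit_avg_bound m n : (1 <= m)%nat -> (1 <= n)%nat ->
  let d := frac (INR m * theta) in
  Rabs (orbit_avg n - / (2 * ln 2)) <= d + 3 * INR m / (d * ln 2) / INR n.
Proof.
  intros Hm Hn d.
  assert (Hd : 0 < d) by (pose proof (frac_bounds (INR m * theta));
                          pose proof (theta_irrational m Hm); unfold d in *; lra).
  assert (Hnpos : 0 < INR n) by (apply lt_0_INR; lia).
  pose proof ln2_pos.
  destruct (carry_sums m n) as [Hid HW].
  assert (Hy2 : Rpower 2 d <= 2).
  { rewrite <- (Rpower_1 2) at 2 by lra. apply Rpower2_le.
    pose proof (frac_bounds (INR m * theta)). unfold d; lra. }
  pose proof (carry_balance (INR n) (INR m) d (ln 2) (Rpower 2 d)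
    (sum_n_m (fun i => g (orbit i)) 1 n) (sum_n_m (fun i => g (orbit (i + m))) 1 n)
    (sum_n_m (fun i => carry (orbit i) (INR m * theta)) 1 n)
    (sum_n_m (fun i => carry (orbit i) (INR m * theta) * g (orbit i)) 1 n)
    (pos_INR n) (pos_INR m) Hd ln2_pos Hy2
    (proj1 (Rpower2_minus_1_bounds d)) (proj2 (Rpower2_minus_1_bounds d))
    (proj1 (sum_n_m_unit_bounds _ n (fun k => g_bounds _)))
    (carry_count m n) HW Hid
    (sum_n_m_shift_bound (fun i => g (orbit i)) m 1 n ltac:(lia) (fun k => g_bounds _)))
    as Hbal.
  replace (orbit_avg n - / (2 * ln 2))
    with (/ INR n * (sum_n_m (fun i => g (orbit i)) 1 n - INR n / (2 * ln 2)))
    by (unfold orbit_avg; field; lra).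
  rewrite Rabs_mult, Rabs_inv, (Rabs_pos_eq (INR n)) by lra.
  apply (Rmult_le_reg_l (INR n)); [lra|].
  replace (INR n * (/ INR n * Rabs _)) with (Rabs (sum_n_m (fun i => g (orbit i)) 1 n
                                                   - INR n / (2 * ln 2)))
    by (field; lra).
  replace (INR n * (d + 3 * INR m / (d * ln 2) / INR n))
    with (INR n * d + 3 * INR m / (d * ln 2)) by (field; lra).
  exact Hbal.
Qed.

(* Equidistribution of the orbit, tested against [g]:
   the averages tend to [int_0^1 2^(-x) dx = 1 / (2 ln 2)]. *)
Theorem orbit_avg_limit : is_lim_seq orbit_avg (/ (2 * ln 2)).
Proof.
  apply is_lim_seq_spec. intros [eps Heps]; simpl.
  destruct (small_frac_multiple theta theta_irrational (eps / 2)) as [m [Hm [Hd0 Hd]]];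
    [lra|].
  set (K := 3 * INR m / (frac (INR m * theta) * ln 2)).
  assert (HK : 0 < K).
  { pose proof ln2_pos. assert (0 < INR m) by (apply lt_0_INR; lia).
    unfold K. apply Rdiv_lt_0_compat; [lra | apply Rmult_lt_0_compat; lra]. }
  destruct (archimed_cor1 (eps / 2 / K)) as [N [HN HN0]];
    [apply Rdiv_lt_0_compat; lra|].
  exists N. intros n Hn.
  assert (HnN : / INR n <= / INR N) by (apply Rinv_le_contravar; [apply lt_0_INR | apply le_INR]; lia).
  assert (HKn : K / INR n < eps / 2).
  { apply (Rmult_lt_compat_l K) in HN; [|lra].
    replace (K * (eps / 2 / K)) with (eps / 2) in HN by (field; lra).
    unfold Rdiv. apply (Rmult_le_compat_l K) in HnN; lra. }
  eapply Rle_lt_trans; [apply (orbit_avg_bound m n); lia|]. fold K. lra.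
Qed.

End Averages.

(** * Application to [t_i = 2^floor((i-1)/alpha) / 3^i] *)

Lemma alpha_pos : 0 < alpha.
Proof. pose proof ln2_pos; pose proof ln2_lt_ln3. unfold alpha. apply Rdiv_lt_0_compat; lra. Qed.

(* [1/alpha = log_2 3] is irrational, since [3^m = 2^k] is impossible for [m >= 1]. *)
Lemma log2_3_irrational m : (1 <= m)%nat -> frac (INR m * / alpha) <> 0.
Proof.
  intros Hm H0. pose proof ln2_pos; pose proof ln2_lt_ln3.
  set (F := Int_part (INR m * / alpha)).
  assert (E : INR m * / alpha = IZR F) by (unfold frac in H0; fold F in H0; lra).
  assert (Fpos : (0 < F)%Z).
  { apply lt_IZR. rewrite <- E. apply Rmult_lt_0_compat; [apply lt_0_INR; lia|].
    apply Rinv_0_lt_compat, alpha_pos. }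
  assert (Hpow : 3 ^ m = 2 ^ Z.to_nat F).
  { apply ln_inv; try (apply pow_lt; lra).
    rewrite !ln_pow by lra. rewrite (INR_IZR_INZ (Z.to_nat F)), Z2Nat.id by lia.
    rewrite <- E. unfold alpha. field. lra. }
  assert (Hnat : (3 ^ m = 2 ^ Z.to_nat F)%nat).
  { apply INR_eq. rewrite !pow_INR. replace (INR 3) with 3 by (simpl; ring).
    replace (INR 2) with 2 by (simpl; ring). exact Hpow. }
  assert (Nat.odd (3 ^ m) = true) by (rewrite Nat.odd_pow; [reflexivity | lia]).
  assert (Nat.odd (2 ^ Z.to_nat F) = false) by (rewrite Nat.odd_pow; [reflexivity | lia]).
  congruence.
Qed.

(* Since [2^((i-1)/alpha) = 3^(i-1)], the term [t_i] only depends on the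
   fractional part of [(i-1)/alpha]. *)
Lemma t_as_g i : t i = g (- / alpha + INR i * / alpha) / 3.
Proof.
  pose proof ln2_pos; pose proof ln2_lt_ln3; pose proof alpha_pos.
  set (x := - / alpha + INR i * / alpha).
  assert (Ex : (INR i - 1) / alpha = x) by (unfold x; field; lra).
  assert (H2x : Rpower 2 x = 3 ^ i / 3).
  { rewrite <- (Rpower_pow i 3) by lra.
    unfold Rpower.
    replace (x * ln 2) with (INR i * ln 3 + - ln 3) by (unfold x, alpha; field; lra).
    rewrite exp_plus, exp_Ropp, exp_ln by lra. reflexivity. }
  unfold t, Rfloor_Z. rewrite Ex, powerRZ_Rpower by lra.
  replace (IZR (Int_part x)) with (x + - frac x) by (unfold frac; ring).
  rewrite Rpower_plus, H2x. unfold g. field. apply pow_nonzero. lra.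
Qed.

Lemma cesaro_as_orbit_avg n : cesaro_t n = orbit_avg (/ alpha) (- / alpha) n / 3.
Proof.
  unfold cesaro_t, orbit_avg, orbit.
  rewrite (sum_n_m_ext _ (fun i => / 3 * g (- / alpha + INR i * / alpha)))
    by (intros; rewrite t_as_g; simpl; unfold Rdiv; ring).
  rewrite sum_n_m_Rmult_l. unfold Rdiv. ring.
Qed.

(* [int_1^(1+alpha) 3^(-x) dx = (1/3 - 3^(-1-alpha)) / ln 3 = (1/3 - 1/6) / ln 3]. *)
Lemma integral_value :
  / alpha * RInt (fun x => Rpower 3 (- x)) 1 (1 + alpha) = 1 / (6 * ln 2).
Proof.
  pose proof ln2_pos; pose proof ln2_lt_ln3.
  set (G x := - Rpower 3 (- x) / ln 3).
  assert (HI : is_RInt (fun x => Rpower 3 (- x)) 1 (1 + alpha) (G (1 + alpha) - G 1)).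
  { apply (is_RInt_derive G).
    - intros x _. unfold G, Rpower. auto_derive; auto. field. lra.
    - intros x _. apply (ex_derive_continuous (fun x => Rpower 3 (- x))).
      unfold Rpower. auto_derive. auto. }
  rewrite (is_RInt_unique _ _ _ _ HI).
  assert (E1 : Rpower 3 (- (1 + alpha)) = / 6).
  { rewrite Ropp_plus_distr, Rpower_plus, !Rpower_Ropp, Rpower_1 by lra.
    unfold Rpower, alpha. replace (ln 2 / ln 3 * ln 3) with (ln 2) by (field; lra).
    rewrite exp_ln by lra. field. }
  assert (E2 : Rpower 3 (- (1)) = / 3) by (rewrite Rpower_Ropp, Rpower_1 by lra; reflexivity).
  unfold G. rewrite E1, E2. unfold alpha. field. lra.
Qed.

Theorem lemma41 :
  is_lim_seq cesaro_t (/ alpha * RInt (fun x => Rpower 3 (- x)) 1 (1 + alpha))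
  /\ / alpha * RInt (fun x => Rpower 3 (- x)) 1 (1 + alpha) = 1 / (6 * ln 2).
Proof.
  rewrite integral_value. split; [|reflexivity].
  pose proof ln2_pos.
  replace (1 / (6 * ln 2)) with (/ (2 * ln 2) * / 3) by (field; lra).
  apply (is_lim_seq_ext (fun n => orbit_avg (/ alpha) (- / alpha) n * / 3)).
  { intros n. rewrite cesaro_as_orbit_avg. reflexivity. }
  apply (is_lim_seq_scal_r _ _ (Finite (/ (2 * ln 2)))).
  exact (orbit_avg_limit (/ alpha) (- / alpha) log2_3_irrational).
Qed.
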